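(* For every $N\ge2$ and every $(n_0,\dots,n_N)$ the following hold: (R1) for every integer $0\le k\le n_{\min}$: $d_{(n_0,\dots,n_N)}(k)=d_{(n_0-k,\dots,n_N-k)}(0)$; (R2) for every $i\in\{1,\dots,N-1\}$: $d_{(n_0,\dots,n_N)}(0)=\min_{j}\big[d_{(n_0,\dots,n_i)}(j)+d_{(j,n_{i+1},\dots,n_N)}(0)\big]$, the minimum over integers $0\le j\le\min(n_0,\dots,n_i)$; (R3) for every $i\in\{1,\dots,N-1\}$ and integer $0\le k\le n_{\min}$: $d_{(n_0,\dots,n_N)}(k)=\min_{j}\big[d_{(n_0,\dots,n_i)}(j)+d_{(j,n_{i+1},\dots,n_N)}(k)\big]$, the minimum over integers $k\le j\le\min(n_0,\dots,n_i)$.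
   Context: For a vector $\mathbf n=(n_0,\dots,n_N)$ of positive integers ($N\ge1$), let $\tilde n_0\le\cdots\le\tilde n_N$ be its nondecreasing rearrangement, $n_{\min}=\tilde n_0$, $c_i=1-i+\min_{k'=1,\dots,N}\lfloor(\sum_{l=0}^{k'}\tilde n_l-i)/k'\rfloor$ for $i=1,\dots,n_{\min}$, and $d_{\mathbf n}(k)=\sum_{i=k+1}^{n_{\min}}c_i$ for integers $0\le k\le n_{\min}$ (so $d_{\mathbf n}(n_{\min})=0$). This $d_{\mathbf n}$ is the diversity-multiplexing tradeoff (at integer points) of the $(n_0,\dots,n_N)$ Rayleigh product channel $\mathbf y=\sqrt{\mathsf{SNR}/(n_1\cdots n_N)}\mathbf H_1\cdots\mathbf H_N\mathbf x+\mathbf z$ with independent i.i.d. $\mathcal{CN}(0,1)$ matrices $\mathbf H_i\in\mathbb C^{n_{i-1}\times n_i}$. Convention: if some entry of $\mathbf n$ is $0$, then $d_{\mathbf n}(0)=0$. *)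

From HB Require Import structures.
From mathcomp Require Import all_boot all_order all_algebra.
Set Implicit Arguments. Unset Strict Implicit. Unset Printing Implicit Defensive.
Import Order.TTheory GRing.Theory Num.Theory.
Local Open Scope ring_scope.

(* A vector n = (n_0,...,n_N) is a seq nat of size N+1. *)

(* minimum of a (nonempty) list of integers; 0 on the empty list (never used). *)
Definition minl (l : seq int) : int :=
  match l with [::] => 0 | x :: t => foldr Num.min x t end.

Definition srt (n : seq nat) : seq nat := sort leq n.

Definition nmin (n : seq nat) : nat := head 0%N (srt n).

Definition cval (n : seq nat) (i : nat) : int :=
  let N := (size n).-1 in
  1 - i%:Z + minl [seq (((\sum_(l < k'.+1) nth 0%N (srt n) l)%:Z - i%:Z) %/ k'%:Z)%Z
                   | k' <- iota 1 N].

Definition dmt (n : seq nat) (k : nat) : int :=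
  \sum_(k.+1 <= i < (nmin n).+1) cval n i.

From HB Require Import structures.
From mathcomp Require Import all_boot all_order all_algebra zify.
Import Order.TTheory GRing.Theory Num.Theory.
Set Implicit Arguments. Unset Strict Implicit. Unset Printing Implicit Defensive.
Local Open Scope ring_scope.

(* The proof rests on a "layer-cake" formula.  Put
     psi_n(y) = y - sum_{x in n} (y - x)^+        (the profile of n).
   For 1 <= i <= n_min, the term c_i of d_n counts the integers y with
   i <= psi_n(y) (the set {y | i <= psi_n(y)} is the interval [i, Y(i)], where
   Y(i) is the inner minimum of the definition of c_i), and summing over i gives
     d_n(k) = sum_y (psi_n(y) - k)^+.
   From this formula:
   - (R1) follows by shifting y, since psi_{n - k}(y) = psi_n(y + k) - k;
   - appending an entry q to n (so psi loses (y - q)^+) yields the one-step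
     recursion d_{(a,q)}(k) = min_{k <= j <= a_min} [d_a(j) + (j-k)(q-k)],
     because sum_{i>k} min(c_i, q-k) of a nonincreasing c is such a minimum;
   - (R3), hence (R2) with k = 0, follows by induction on the tail of the
     chain, using that one-step recursion and an exchange of two minima. *)

Local Notation pospart z := (Num.max z 0).

Lemma minl_le (l : seq int) x : x \in l -> minl l <= x.
Proof.
case: l => [|z t] //=; elim: t => [|w t IH] /=; first by rewrite inE => /eqP->.
rewrite ge_min !inE => /or3P[/eqP xz|/eqP->|xt]; first by rewrite IH ?orbT ?xz ?mem_head.
- by rewrite lexx.
- by rewrite IH ?orbT // inE xt orbT.
Qed.

Lemma minl_mem (l : seq int) : l != [::] -> minl l \in l.
Proof.
case: l => [|z t] //= _; elim: t => [|w t IH] /=; first exact: mem_head.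
rewrite /Num.min; case: ifP => _; first by rewrite !inE eqxx orbT.
by move: IH; rewrite !inE => /orP[->|->]; rewrite ?orbT.
Qed.

Lemma le_minl (l : seq int) y : l != [::] -> (y <= minl l) = all (fun x => y <= x) l.
Proof.
move=> l_nil; apply/idP/allP => [y_le x /minl_le|all_ge]; first exact: le_trans.
exact: all_ge _ (minl_mem l_nil).
Qed.

Definition rmin (lo hi : nat) (f : nat -> int) : int :=
  minl [seq f j | j <- iota lo (hi - lo).+1].

Lemma mem_iota_range lo hi j : (lo <= hi)%N ->
  (j \in iota lo (hi - lo).+1) = (lo <= j <= hi)%N.
Proof. by move=> le_lo_hi; rewrite mem_iota addnS subnKC // ltnS. Qed.

Lemma rmin_le lo hi f j : (lo <= j <= hi)%N -> rmin lo hi f <= f j.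
Proof.
move=> /andP[lo_j j_hi]; apply/minl_le/map_f.
by rewrite mem_iota_range ?lo_j ?(leq_trans lo_j).
Qed.

Lemma rmin_attained lo hi f : (lo <= hi)%N ->
  exists2 j, (lo <= j <= hi)%N & rmin lo hi f = f j.
Proof.
move=> le_lo_hi; have /mapP[j] : rmin lo hi f \in [seq f j | j <- iota lo (hi - lo).+1].
  by apply: minl_mem.
by rewrite mem_iota_range //; exists j.
Qed.

Lemma rmin_eq lo hi f v : (lo <= hi)%N ->
  (forall j, (lo <= j <= hi)%N -> v <= f j) ->
  (exists2 j, (lo <= j <= hi)%N & f j <= v) -> rmin lo hi f = v.
Proof.
move=> le_lo_hi lb [j j_in fj_le]; apply: le_anti.
rewrite (le_trans (rmin_le f j_in)) //=.
by have [j' j'_in ->] := rmin_attained f le_lo_hi; apply: lb.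
Qed.

Lemma eq_rmin lo hi f g : (lo <= hi)%N ->
  (forall j, (lo <= j <= hi)%N -> f j = g j) -> rmin lo hi f = rmin lo hi g.
Proof.
by move=> le_lo_hi fg; congr minl; apply/eq_in_map => j; rewrite mem_iota_range // => /fg.
Qed.


Lemma rmin_addl lo hi (c : int) f : (lo <= hi)%N ->
  c + rmin lo hi f = rmin lo hi (fun j => c + f j).
Proof.
move=> le_lo_hi; symmetry; apply: rmin_eq => //.
  by move=> j j_in; rewrite lerD2l rmin_le.
by have [j j_in ->] := rmin_attained f le_lo_hi; exists j.
Qed.

(* Both sides are the minimum of F j j' over k <= j' <= j <= M, j' <= m. *)
Lemma rmin_swap (F : nat -> nat -> int) k M m : (k <= minn M m)%N ->
  rmin k (minn M m) (fun j' => rmin j' M (fun j => F j j')) =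
  rmin k M (fun j => rmin k (minn j m) (fun j' => F j j')).
Proof.
rewrite leq_min => /andP[kM km]; apply: le_anti; apply/andP; split.
- have [j j_in ->] := rmin_attained (fun j => rmin k (minn j m) (F j)) kM.
  have [|j' j'_in ->] := rmin_attained (F j) (lo := k) (hi := minn j m).
    by case/andP: j_in => kj _; rewrite leq_min kj km.
  move: j_in j'_in; rewrite leq_min => /andP[_ jM] /and3P[kj' j'j j'm].
  apply: le_trans (rmin_le _ _) (rmin_le _ _); first by rewrite leq_min kj' (leq_trans j'j jM).
  by rewrite j'j.
- have [|j' j'_in ->] := rmin_attained (fun j' => rmin j' M (fun j => F j j')) (lo := k) (hi := minn M m).
    by rewrite leq_min kM.
  move: j'_in; rewrite leq_min => /and3P[kj' j'M j'm].
  have [j j_in ->] := rmin_attained (fun j => F j j') j'M.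
  case/andP: j_in => j'j jM.
  apply: le_trans (rmin_le _ _) (rmin_le _ _); first by rewrite (leq_trans kj' j'j).
  by rewrite kj' leq_min j'j.
Qed.

Definition ind (b : bool) : int := if b then 1 else 0.

Lemma count_interval (lo hi : int) (k M : nat) : k%:Z <= lo -> hi <= M%:Z ->
  \sum_(k <= t < M) ind ((lo <= t%:Z) && (t%:Z < hi)) = pospart (hi - lo).
Proof.
elim: M hi => [|M IH] hi k_lo hi_M; first by rewrite big_geq //; lia.
have [Mk|kM] := ltnP M k; first by rewrite big_geq //; lia.
rewrite big_nat_recr //= (eq_big_nat _ _ (F2 := fun t : nat =>
  ind ((lo <= t%:Z) && (t%:Z < Num.min hi M%:Z)))); last first.
  by move=> t /andP[_ tM]; congr ind; rewrite lt_min ltz_nat tM andbT.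
rewrite IH //; last by rewrite ge_min lexx orbT.
by rewrite /ind; case: ifP; lia.
Qed.

(* Truncating a nonincreasing sequence c at level Q: the optimal split point
   j is the last index with c_j >= Q. *)
Section TruncatedSum.
Variables (c : nat -> int) (Q M : nat).
Hypothesis c_nonincr : forall i1 i2, (i1 <= i2 <= M)%N -> c i2 <= c i1.

Lemma sum_min_attained k : (k <= M)%N -> exists2 j, (k <= j <= M)%N &
  \sum_(k.+1 <= i < M.+1) Num.min (c i) Q%:Z =
  \sum_(j.+1 <= i < M.+1) c i + ((j - k) * Q)%:Z.
Proof.
move Mk_d : (M - k)%N => d; elim: d k Mk_d => [|d IH] k Mk_d kM.
  have -> : k = M by apply/eqP; rewrite eqn_leq kM -subn_eq0 Mk_d.
  by exists M; rewrite ?leqnn // !big_geq // subnn.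
have kM' : (k < M)%N by rewrite -subn_gt0 Mk_d.
rewrite big_ltn ?ltnS //.
have [cQ|Qc] := ltrP (c k.+1) Q%:Z.
  exists k; rewrite ?leqnn // subnn mul0n addr0 [RHS]big_ltn ?ltnS //.
  congr (_ + _); apply: eq_big_nat => i /andP[ki iM]; apply: min_l.
  by apply: le_trans (ltW cQ); apply: c_nonincr; rewrite (ltnW ki) -ltnS.
have [|j /andP[kj jM] ->] := IH k.+1 _ kM'; first by rewrite subnS Mk_d.
exists j; first by rewrite ltnW.
nia.
Qed.

(* Each split point j bounds the truncated sum from above, since
   min(c_i, Q) <= Q for i <= j and min(c_i, Q) <= c_i for i > j. *)
Lemma sum_min_nonincr k : (k <= M)%N ->
  \sum_(k.+1 <= i < M.+1) Num.min (c i) Q%:Z =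
  rmin k M (fun j => \sum_(j.+1 <= i < M.+1) c i + ((j - k) * Q)%:Z).
Proof.
move=> kM; symmetry; apply: rmin_eq => //; last first.
  by have [j j_in ->] := sum_min_attained kM; exists j.
move=> j /andP[kj jM]; rewrite (big_cat_nat (n := j.+1)) //= addrC.
apply: lerD; first by apply: ler_sum => i _; rewrite ge_min lexx.
have -> : ((j - k) * Q)%:Z = \sum_(k.+1 <= i < j.+1) Q%:Z by rewrite sumr_const_nat; lia.
by apply: ler_sum => i _; rewrite ge_min lexx orbT.
Qed.
End TruncatedSum.

Lemma nmin_le (n : seq nat) (x : nat) : x \in n -> (nmin n <= x)%N.
Proof.
rewrite -(mem_sort leq) /nmin /srt.
have := sort_sorted leq_total n; case: (sort leq n) => [|h t] //= sorted_ht.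
rewrite inE => /orP[/eqP->//|xt].
by have /allP := order_path_min leq_trans sorted_ht; apply.
Qed.

Lemma nmin_mem (n : seq nat) : n != [::] -> nmin n \in n.
Proof.
move=> n_nil; rewrite -(mem_sort leq) /nmin /srt.
have := size_sort leq n; case: (sort leq n) => [|h t] /=; last by rewrite mem_head.
by move/esym/eqP; rewrite size_eq0 (negbTE n_nil).
Qed.

Lemma le_nmin (n : seq nat) x : n != [::] -> (x <= nmin n)%N = all (leq x) n.
Proof.
move=> n_nil; apply/idP/allP => [x_le y y_n|all_ge]; first exact: leq_trans x_le (nmin_le y_n).
exact: all_ge _ (nmin_mem n_nil).
Qed.

Lemma nmin_cat (a b : seq nat) : a != [::] -> b != [::] ->
  nmin (a ++ b) = minn (nmin a) (nmin b).
Proof.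
move=> a_nil b_nil; have ab_nil : a ++ b != [::] by case: (a) a_nil.
apply/eqP; rewrite eqn_leq le_nmin // all_cat -!le_nmin // -leq_min leqnn andbT.
by rewrite leq_min !le_nmin // -all_cat -le_nmin.
Qed.

Definition profile (n : seq nat) (y : nat) : int :=
  y%:Z - \sum_(x <- n) pospart (y%:Z - x%:Z).

Lemma profile_perm (n m : seq nat) y : perm_eq n m -> profile n y = profile m y.
Proof. by move=> nm; rewrite /profile (perm_big _ nm). Qed.

Lemma sum_pospart_ge0 (n : seq nat) (y : int) : 0 <= \sum_(x <- n) pospart (y - x%:Z).
Proof. by apply: sumr_ge0 => x _; rewrite le_max lexx orbT. Qed.

Lemma profile_le_arg (n : seq nat) y : profile n y <= y%:Z.
Proof. by have := sum_pospart_ge0 n y%:Z; rewrite /profile; lia. Qed.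

Lemma profile_le_mem (n : seq nat) y (x : nat) : x \in n -> profile n y <= x%:Z.
Proof.
move=> x_n; rewrite (profile_perm _ (perm_to_rem x_n)) /profile big_cons.
set S := \sum_(_ <- rem x n) _; have S_ge0 : 0 <= S by apply: sum_pospart_ge0.
lia.
Qed.

Lemma profile_at_nmin (n : seq nat) : profile n (nmin n) = (nmin n)%:Z.
Proof.
rewrite /profile big1_seq ?subr0 // => x /andP[_ /nmin_le]; lia.
Qed.

Lemma profile_sumn_le0 (n : seq nat) : (1 < size n)%N -> profile n (sumn n) <= 0.
Proof.
case: n => [|x1 [|x2 r]] //= _; rewrite /profile !big_cons /=.
set S := \sum_(_ <- r) _; have S_ge0 : 0 <= S by apply: sum_pospart_ge0.
lia.
Qed.

Lemma profile_rcons (a : seq nat) q y :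
  profile (rcons a q) y = profile a y - pospart (y%:Z - q%:Z).
Proof. by rewrite /profile -cats1 big_cat big_seq1 opprD addrA. Qed.

Lemma profile_shift (n : seq nat) k y : all (leq k) n ->
  profile [seq (x - k)%N | x <- n] y = profile n (y + k) - k%:Z.
Proof.
move=> /allP k_le; rewrite /profile big_map.
rewrite (eq_big_seq (fun x => pospart ((y + k)%N%:Z - x%:Z))); first by rewrite PoszD addrAC addrK.
by move=> x /k_le; lia.
Qed.

Lemma sum_sub_nat (F : nat -> nat) (y K : nat) :
  \sum_(0 <= l < K) (y%:Z - (F l)%:Z) = (y * K)%N%:Z - (\sum_(0 <= l < K) F l)%N%:Z.
Proof.
elim: K => [|K IH]; first by rewrite !big_geq // muln0.
by rewrite !big_nat_recr //= IH; lia.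
Qed.

(* sum_x (y - x)^+ dominates every prefix sum of the y - s_l ... *)
Lemma prefix_le_sum_pospart (s : seq nat) (y K : nat) : (K <= size s)%N ->
  (y * K)%N%:Z - (\sum_(0 <= l < K) nth 0%N s l)%N%:Z <=
  \sum_(x <- s) pospart (y%:Z - x%:Z).
Proof.
move=> K_s; rewrite -sum_sub_nat [X in _ <= X](big_nth 0%N).
rewrite [X in _ <= X](big_cat_nat (n := K)) //= -[X in X <= _]addr0; apply: lerD.
  by apply: ler_sum => l _; rewrite le_max lexx.
by apply: sumr_ge0 => l _; rewrite le_max lexx orbT.
Qed.

(* ... and, for sorted s, equals one of them: the entries below y form a
   prefix of s. *)
Lemma sum_pospart_sorted (s : seq nat) (y : nat) : sorted leq s ->
  exists2 K, (K <= size s)%N & \sum_(x <- s) pospart (y%:Z - x%:Z) =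
  (y * K)%N%:Z - (\sum_(0 <= l < K) nth 0%N s l)%N%:Z.
Proof.
move=> s_sorted; pose K := find (leq y) s.
exists K; first exact: find_size.
rewrite -sum_sub_nat (big_nth 0%N) (big_cat_nat (n := K)) ?find_size //=.
rewrite [X in _ + X]big1_seq ?addr0; last first.
  move=> l /andP[_]; rewrite mem_index_iota => /andP[Kl ls].
  have ys : has (leq y) s by rewrite has_find (leq_ltn_trans Kl).
  have yK : (y <= nth 0%N s K)%N := nth_find 0%N ys.
  have sKl := sorted_leq_nth leq_trans leqnn 0%N s_sorted K l (leq_ltn_trans Kl ls) ls Kl.
  lia.
apply: eq_big_nat => l /andP[_ lK]; have := before_find 0%N lK; lia.
Qed.

Definition psum (n : seq nat) (k : nat) : nat := \sum_(l < k.+1) nth 0%N (srt n) l.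

Definition ymax (n : seq nat) (i : nat) : int :=
  minl [seq (((psum n k)%:Z - i%:Z) %/ k%:Z)%Z | k <- iota 1 (size n).-1].

Lemma cvalE (n : seq nat) i : cval n i = 1 - i%:Z + ymax n i.
Proof. by []. Qed.

Lemma le_ymax (n : seq nat) i (y : int) : (1 < size n)%N ->
  (y <= ymax n i) =
  all (fun k => y * k%:Z <= (psum n k)%:Z - i%:Z) (iota 1 (size n).-1).
Proof.
move=> n_size; rewrite /ymax le_minl ?all_map; last by case: (size n) n_size => [|[]].
by apply: eq_in_all => k; rewrite mem_iota => /andP[k_gt0 _]; rewrite /= lez_divRL.
Qed.

Lemma ge_profile (n : seq nat) (i y : nat) : (1 < size n)%N -> (1 <= i <= nmin n)%N ->
  (i%:Z <= profile n y) = (i <= y)%N && (y%:Z <= ymax n i).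
Proof.
move=> n_size /andP[i_gt0 i_min]; rewrite le_ymax //.
have s_perm : perm_eq (srt n) n by rewrite /srt perm_sort.
rewrite -(profile_perm y s_perm) /profile.
set s := srt n; have s_size : size s = size n by rewrite size_sort.
have psumE k : psum n k = \sum_(0 <= l < k.+1) nth 0%N s l by rewrite /psum big_mkord.
have s0 : nth 0%N s 0 = nmin n by rewrite /nmin nth0.
set S : int := \sum_(_ <- s) _.
have S_ge0 : 0 <= S by apply: sum_pospart_ge0.
apply/idP/idP => [i_le|/andP[i_y /allP ymax_ge]].
  apply/andP; split; first lia.
  apply/allP => k; rewrite mem_iota psumE => /andP[k_gt0 k_lt].
  have k_size : (k.+1 <= size s)%N by rewrite s_size; move: k_lt n_size; lia.
  have := prefix_le_sum_pospart y k_size; rewrite -/S.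
  set T := (\sum_(0 <= l < k.+1) _)%N; nia.
have [K K_size S_eq] := sum_pospart_sorted y (sort_sorted leq_total n : sorted leq s).
rewrite -/S in S_eq; rewrite S_eq.
case: K K_size S_eq => [|[|k]] K_size S_eq.
- by rewrite big_geq //; lia.
- by rewrite big_nat1 s0; lia.
have k_in : k.+1 \in iota 1 (size n).-1 by rewrite mem_iota; move: K_size; rewrite s_size; lia.
move: (ymax_ge _ k_in); rewrite psumE; set T := (\sum_(0 <= l < k.+2) _)%N; nia.
Qed.

(* n_min <= Y(i) < sum n for 1 <= i <= n_min, since psi_n(n_min) = n_min
   and psi_n(sum n) <= 0. *)
Lemma ymax_bounds (n : seq nat) i : (1 < size n)%N -> (1 <= i <= nmin n)%N ->
  (nmin n)%:Z <= ymax n i < (sumn n)%:Z.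
Proof.
move=> n_size i_range; have /andP[_ i_min] := i_range.
have := ge_profile (nmin n) n_size i_range; rewrite profile_at_nmin lez_nat i_min.
move=> /esym/andP[_ ->] /=; rewrite ltNge; apply/negP => ymax_ge.
have := ge_profile (sumn n) n_size i_range; rewrite ymax_ge andbT.
have := profile_sumn_le0 n_size.
have : (nmin n <= sumn n)%N.
  by case: (n) => [|x r]; rewrite // (leq_trans (nmin_le (mem_head x r))) ?leq_addr.
lia.
Qed.

Lemma cval_count (n : seq nat) i B : (1 < size n)%N -> (1 <= i <= nmin n)%N ->
  (sumn n <= B)%N -> cval n i = \sum_(0 <= y < B) ind (i%:Z <= profile n y).
Proof.
move=> n_size i_range n_B; have /andP[i_gt0 i_min] := i_range.
have /andP[ymax_ge ymax_lt] := ymax_bounds n_size i_range.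
rewrite (eq_big_nat _ _ (F2 := fun y : nat =>
  ind ((i%:Z <= y%:Z) && (y%:Z < ymax n i + 1)))); last first.
  by move=> y _; rewrite ge_profile // lez_nat ltzD1.
by rewrite cvalE count_interval //; lia.
Qed.

Lemma dmt_layer_cake (n : seq nat) k B : (1 < size n)%N -> (sumn n <= B)%N ->
  dmt n k = \sum_(0 <= y < B) pospart (profile n y - k%:Z).
Proof.
move=> n_size n_B; rewrite /dmt.
rewrite (eq_big_nat _ _ (F2 := fun i => \sum_(0 <= y < B) ind (i%:Z <= profile n y))); last first.
  by move=> i /andP[k_i i_min]; apply: cval_count; rewrite // (leq_trans _ k_i).
rewrite exchange_big_nat; apply: eq_big_nat => y _.
have profile_le : profile n y <= (nmin n)%:Z.
  by apply: profile_le_mem; apply: nmin_mem; case: (n) n_size.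
rewrite (eq_big_nat _ _ (F2 := fun i : nat =>
  ind ((k.+1%:Z <= i%:Z) && (i%:Z < profile n y + 1)))); last first.
  by move=> i /andP[k_i _]; rewrite ltzD1 lez_nat k_i.
by rewrite count_interval //; lia.
Qed.

Lemma cval_nonincr (n : seq nat) i1 i2 : (1 < size n)%N -> (i1 <= i2)%N ->
  cval n i2 <= cval n i1.
Proof.
move=> n_size i12; rewrite !cvalE.
suff : ymax n i2 <= ymax n i1 by lia.
rewrite le_ymax //; apply/allP => k k_in.
have := lexx (ymax n i2); rewrite le_ymax // => /allP/(_ k k_in); lia.
Qed.

Lemma dmt_shift (n : seq nat) k j : (1 < size n)%N -> (k <= nmin n)%N ->
  dmt [seq (x - k)%N | x <- n] j = dmt n (j + k).
Proof.
move=> n_size k_min; have k_le : all (leq k) n by rewrite -le_nmin //; case: (n) n_size.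
have sumn_shift : (sumn [seq (x - k)%N | x <- n] <= sumn n)%N.
  by elim: (n) => //= x r IH; apply: leq_add; rewrite ?leq_subr.
rewrite (dmt_layer_cake j (B := sumn n)) ?size_map //.
rewrite (dmt_layer_cake (j + k) (B := sumn n + k)) ?leq_addr //.
rewrite [RHS](big_cat_nat (n := k)) ?leq_addl //= [X in _ = X + _]big_nat_cond.
rewrite [X in _ = X + _]big1 ?add0r.
  rewrite -[X in _ = \sum_(X <= _ < _) _](add0n k) big_addn addnK; apply: eq_big_nat => y _.
  by rewrite profile_shift //; lia.
move=> y; rewrite andbT => /andP[_ y_k].
by have := profile_le_arg n y; lia.
Qed.

Lemma level_count (a : seq nat) q k t B : (1 < size a)%N -> (k <= t < nmin a)%N ->
  (k <= q)%N -> (sumn a <= B)%N ->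
  \sum_(0 <= y < B) ind ((k%:Z + pospart (y%:Z - q%:Z) <= t%:Z) && (t%:Z < profile a y)) =
  Num.min (cval a t.+1) (q - k)%N%:Z.
Proof.
move=> a_size /andP[k_t t_min] k_q a_B.
have t_range : (1 <= t.+1 <= nmin a)%N by [].
have /andP[ymax_ge ymax_lt] := ymax_bounds a_size t_range.
rewrite (eq_big_nat _ _ (F2 := fun y : nat => ind ((t.+1%:Z <= y%:Z) &&
  (y%:Z < Num.min (ymax a t.+1 + 1) (t.+1 + q - k)%N%:Z)))); last first.
  move=> y _; congr ind; rewrite -[t%:Z < _]/(t.+1%:Z <= _) ge_profile //.
  by apply/idP/idP; lia.
by rewrite cvalE count_interval //; lia.
Qed.

Lemma dmt_rcons (a : seq nat) q k : (1 < size a)%N -> (k <= nmin a)%N -> (k <= q)%N ->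
  dmt (rcons a q) k = rmin k (nmin a) (fun j => dmt a j + ((j - k) * (q - k))%N%:Z).
Proof.
move=> a_size k_min k_q; set B := sumn (rcons a q).
have a_B : (sumn a <= B)%N by rewrite /B sumn_rcons leq_addr.
have aq_size : (1 < size (rcons a q))%N by rewrite size_rcons ltnW.
rewrite (dmt_layer_cake k aq_size (leqnn B)).
rewrite (eq_big_nat _ _ (F2 := fun y : nat => \sum_(k <= t < nmin a)
  ind ((k%:Z + pospart (y%:Z - q%:Z) <= t%:Z) && (t%:Z < profile a y)))); last first.
  move=> y _; rewrite count_interval ?profile_rcons; [lia | lia |].
  by apply: profile_le_mem; apply: nmin_mem; case: (a) a_size.
rewrite exchange_big_nat (eq_big_nat _ _ (F2 := fun t => Num.min (cval a t.+1) (q - k)%N%:Z));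
  last by move=> t t_range; apply: level_count.
have -> : \sum_(k <= t < nmin a) Num.min (cval a t.+1) (q - k)%N%:Z =
          \sum_(k.+1 <= i < (nmin a).+1) Num.min (cval a i) (q - k)%N%:Z by rewrite big_add1.
by apply: sum_min_nonincr => // i1 i2 /andP[i12 _]; apply: cval_nonincr.
Qed.

Lemma cval_pair p q i : cval [:: p; q] i = 1 - i%:Z + ((p + q)%N%:Z - i%:Z).
Proof.
rewrite cvalE /ymax /= divz1 /psum big_ord_recr big_ord1 /=.
have s_perm : perm_eq (srt [:: p; q]) [:: p; q] by rewrite /srt perm_sort.
move: (perm_size s_perm) (perm_sumn s_perm).
by case: (srt [:: p; q]) => [|x [|y []]] //= _; rewrite !addn0 => ->.
Qed.

Lemma dmt_pair p q k : (k <= minn p q)%N -> dmt [:: p; q] k = ((p - k) * (q - k))%N%:Z.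
Proof.
move=> k_min; have pq_min : nmin [:: p; q] = minn p q by rewrite -cat1s nmin_cat.
rewrite /dmt pq_min big_add1 /= (@telescope_sumr_eq _ _ _ (fun t => - ((p - t) * (q - t))%N%:Z)) //.
  nia.
move=> t /andP[_ t_min]; rewrite cval_pair; move: t_min; rewrite leq_min; nia.
Qed.

Lemma nmin_cons j (b : seq nat) : b != [::] -> nmin (j :: b) = minn j (nmin b).
Proof. by move=> b_nil; rewrite -cat1s nmin_cat. Qed.

Theorem dmt_split (a b : seq nat) k : (1 < size a)%N -> b != [::] ->
  (k <= nmin (a ++ b))%N ->
  dmt (a ++ b) k = rmin k (nmin a) (fun j => dmt a j + dmt (j :: b) k).
Proof.
move=> a_size; have a_nil : a != [::] by case: (a) a_size.
elim/last_ind: b k => [//|b q IH] k _ k_min.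
have rcons_nil : rcons b q != [::] by rewrite -size_eq0 size_rcons.
move: (k_min); rewrite nmin_cat // leq_min => /andP[k_M k_bq].
have k_q : (k <= q)%N by rewrite (leq_trans k_bq) ?nmin_le // mem_rcons mem_head.
have [-> {IH} | b_nil] := eqVneq b [::].
  rewrite cats1 dmt_rcons //; apply: eq_rmin => // j /andP[k_j _].
  by rewrite dmt_pair // leq_min k_j.
set M := nmin a; set m := nmin b; set P := fun j' => ((j' - k) * (q - k))%N%:Z.
have k_m : (k <= m)%N by move: k_bq; rewrite -cats1 nmin_cat // leq_min => /andP[].
have ab_size : (1 < size (a ++ b))%N by rewrite size_cat (leq_trans a_size) ?leq_addr.
rewrite -rcons_cat dmt_rcons //; last by rewrite nmin_cat // leq_min k_M.
rewrite nmin_cat // -/M -/m.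
transitivity (rmin k (minn M m) (fun j' => rmin j' M (fun j => dmt a j + dmt (j :: b) j' + P j'))).
  apply: eq_rmin; first by rewrite leq_min k_M.
  move=> j' /andP[k_j']; rewrite leq_min => /andP[j'_M j'_m].
  rewrite IH // ?nmin_cat ?leq_min ?j'_M // addrC rmin_addl //.
  by apply: eq_rmin => // j _; rewrite addrC.
rewrite rmin_swap ?leq_min ?k_M //; apply: eq_rmin => // j /andP[k_j j_M].
have jb_size : (1 < size (j :: b))%N by case: (b) b_nil.
have k_jb : (k <= nmin (j :: b))%N by rewrite nmin_cons // leq_min k_j.
rewrite -rcons_cons dmt_rcons // nmin_cons // -/m rmin_addl ?leq_min ?k_j //.
by apply: eq_rmin => [|j' _]; rewrite ?leq_min ?k_j ?addrA.
Qed.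

Theorem theorem5 (N : nat) (n : seq nat) :
  (2 <= N)%N -> size n = N.+1 -> all (fun x => 0 < x)%N n ->
  (* (R1) *)
  (forall k : nat, (k <= nmin n)%N ->
     dmt n k = dmt [seq (x - k)%N | x <- n] 0) /\
  (* (R2) *)
  (forall i : nat, (1 <= i <= N.-1)%N ->
     dmt n 0 =
     minl [seq dmt (take i.+1 n) j + dmt (j :: drop i.+1 n) 0
          | j <- iota 0 (nmin (take i.+1 n)).+1]) /\
  (* (R3) *)
  (forall i k : nat, (1 <= i <= N.-1)%N -> (k <= nmin n)%N ->
     dmt n k =
     minl [seq dmt (take i.+1 n) j + dmt (j :: drop i.+1 n) k
          | j <- iota k ((nmin (take i.+1 n)) - k).+1]).
Proof.
move=> N_ge2 n_size _.
have n_size2 : (1 < size n)%N by rewrite n_size ltnS (leq_trans _ N_ge2).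
have R3 i k : (1 <= i <= N.-1)%N -> (k <= nmin n)%N -> dmt n k =
    rmin k (nmin (take i.+1 n)) (fun j => dmt (take i.+1 n) j + dmt (j :: drop i.+1 n) k).
  move=> /andP[i_ge1 i_le] k_min; rewrite -[in LHS](cat_take_drop i.+1 n).
  have i_N : (i < N)%N by move: i_le; case: (N) N_ge2 => //= N' _; lia.
  apply: dmt_split; rewrite ?cat_take_drop //.
    by rewrite size_take n_size ltnS i_N.
  by rewrite -size_eq0 size_drop n_size subn_eq0 -ltnNge ltnS.
split; [|split].
- by move=> k k_min; rewrite dmt_shift // add0n.
- by move=> i i_range; rewrite (R3 i 0) // /rmin subn0.
- exact: R3.
Qed.
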